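(* Let $p\ge 2$ and let $J$ be a periodic Jacobi operator on $\ell^2(\mathbb{Z})$ with period $p$, given by $(J\psi)_n=a_{n-1}\psi_{n-1}+b_n\psi_n+a_n\psi_{n+1}$, where $a_n>0$, $b_n\in\mathbb{R}$, $a_{n+p}=a_n$, $b_{n+p}=b_n$ for all $n$. Let $A:=(a_1\cdots a_p)^{1/p}$, $s:=\lambda_p^{\max}-\lambda_1^{\min}$, and let $\sigma_1,\dots,\sigma_p$ be the spectral bands of $J$. Then $$\frac{4A^p}{s^{p-1}}\le\max_{1\le n\le p}|\sigma_n|.$$
   Context: Spectral structure: the spectrum of $J$ is $\sigma(J)=\{\lambda\in\mathbb{R}: |\Delta(\lambda)|\le 2\}$, where $\Delta(\lambda)=\operatorname{tr}\big(A_p(\lambda)A_{p-1}(\lambda)\cdots A_1(\lambda)\big)$ with $A_n(\lambda)=\begin{pmatrix}(\lambda-b_n)/a_n & -a_{n-1}/a_n\\ 1&0\end{pmatrix}$ (the discriminant, a real polynomial of degree $p$). It is a standard fact that this set is a union of $p$ closed intervals (bands) $\sigma_n=[\lambda_n^{\min},\lambda_n^{\max}]$, $1\le n\le p$, with $\lambda_n^{\min}<\lambda_n^{\max}\le\lambda_{n+1}^{\min}$ (bands may touch but do not overlap); on each band $\Delta$ is monotone and maps it onto $[-2,2]$. The spectral gaps are $\gamma_n=(\lambda_n^{\max},\lambda_{n+1}^{\min})$, $1\le n\le p-1$ (possibly empty). $|\cdot|$ denotes Lebesgue measure (length). *)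

From mathcomp Require Import all_boot all_order all_algebra.
From mathcomp Require Import all_classical all_reals exp.
Set Implicit Arguments. Unset Strict Implicit. Unset Printing Implicit Defensive.
Import Order.TTheory GRing.Theory Num.Theory.
Local Open Scope ring_scope.

Definition transfer (R : realType) (a b : int -> R) (n : int) (l : R) : 'M[R]_2 :=
  \matrix_(i < 2, j < 2)
    (if (val i == 0%N) && (val j == 0%N) then (l - b n) / a n
     else if (val i == 0%N) then - (a (n - 1)) / a n
     else if (val j == 0%N) then 1 else 0).

Definition discriminant (R : realType) (p : nat) (a b : int -> R) (l : R) : R :=
  \tr (\big[mulmx/1%:M]_(i < p) transfer a b (p - i)%:Z l).

Definition spectrum (R : realType) (p : nat) (a b : int -> R) : set R :=
  [set l | `|discriminant p a b l| <= 2].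

Definition geomA (R : realType) (p : nat) (a : int -> R) : R :=
  powR (\prod_(i < p) a (i.+1)%:Z) (p%:R^-1).

(* lo, hi (indexed 0..p-1) are the edges of the p spectral bands of J:
   sigma(J) is their union, they are ordered and non-overlapping, and on each
   band Delta is monotone and maps the band onto [-2,2]. *)
Definition band_edges (R : realType) (p : nat) (a b : int -> R)
    (lo hi : nat -> R) : Prop :=
  [/\ (forall l, spectrum p a b l <->
         exists2 n, (n < p)%N & lo n <= l <= hi n),
      (forall n, (n < p)%N -> lo n < hi n),
      (forall n, (n.+1 < p)%N -> hi n <= lo n.+1),
      (forall n, (n < p)%N ->
         (forall x y, lo n <= x -> x <= y -> y <= hi n ->
            discriminant p a b x <= discriminant p a b y) \/
         (forall x y, lo n <= x -> x <= y -> y <= hi n ->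
            discriminant p a b y <= discriminant p a b x)) &
      (forall n, (n < p)%N -> forall y, -2 <= y <= 2 ->
         exists2 x, lo n <= x <= hi n & discriminant p a b x = y)].

From mathcomp Require Import all_boot all_order all_algebra.
From mathcomp Require Import all_classical all_reals exp.
From mathcomp Require Import lra.
Set Implicit Arguments. Unset Strict Implicit. Unset Printing Implicit Defensive.
Import Order.TTheory GRing.Theory Num.Theory.
Local Open Scope ring_scope.

(* The discriminant is a polynomial of degree p with leading coefficient
   1/(a_1...a_p) = A^-p.  For a level c in [0,2), Delta - c has exactly one root
   r_n inside each band sigma_n, so at a point y of sigma_1 where Delta(y) = -2,
     2 + c = |Delta(y) - c| = A^-p |y - r_1| prod_{n>1} |y - r_n|
           <= A^-p |sigma_1| s^(p-1).
   Letting c tend to 2 gives 4 A^p / s^(p-1) <= |sigma_1|. *)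

Lemma mulmx2E (R : pzSemiRingType) m n (A : 'M[R]_(m, 2)) (B : 'M_(2, n)) i j :
  (A *m B) i j = A i ord0 * B ord0 j + A i ord_max * B ord_max j.
Proof.
by rewrite mxE !big_ord_recl big_ord0 addr0 (_ : lift ord0 ord0 = ord_max) //; apply: val_inj.
Qed.

Lemma mxtrace2E (R : pzSemiRingType) (A : 'M[R]_2) : \tr A = A ord0 ord0 + A ord_max ord_max.
Proof.
by rewrite /mxtrace !big_ord_recl big_ord0 addr0 (_ : lift ord0 ord0 = ord_max) //; apply: val_inj.
Qed.

Section DiscriminantPolynomial.
Variables (R : realType) (a b : int -> R).
Hypothesis a_neq0 : forall n, a n != 0.

Definition transfer_poly (n : int) : 'M[{poly R}]_2 :=
  \matrix_(i < 2, j < 2)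
    (if (val i == 0%N) && (val j == 0%N) then (a n)^-1 *: ('X - (b n)%:P)
     else if (val i == 0%N) then (- (a (n - 1)) / a n)%:P
     else if (val j == 0%N) then 1 else 0).

Lemma transfer_polyE n l : map_mx (horner_eval l) (transfer_poly n) = transfer a b n l.
Proof.
apply/matrixP => i j; rewrite !mxE /horner_eval /=.
case: ifP => _; first by rewrite hornerZ hornerXsubC mulrC.
by do 2?case: ifP => _; rewrite hornerC.
Qed.

Definition transfer_prod_poly (f : nat -> int) k : 'M[{poly R}]_2 :=
  \prod_(i < k) transfer_poly (f i).

Lemma transfer_prod_polyE f k l :
  map_mx (horner_eval l) (transfer_prod_poly f k) =
  \big[mulmx/1%:M]_(i < k) transfer a b (f i) l.
Proof. by rewrite rmorph_prod; apply: eq_bigr => i _; apply: transfer_polyE. Qed.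

Lemma size_transfer_poly00 n : size (transfer_poly n ord0 ord0) = 2%N.
Proof. by rewrite mxE size_scale ?size_XsubC ?invr_eq0. Qed.

Lemma lead_coef_transfer_poly00 n : lead_coef (transfer_poly n ord0 ord0) = (a n)^-1.
Proof. by rewrite mxE lead_coefZ lead_coefXsubC mulr1. Qed.

Lemma transfer_prod_poly_size f k (P := transfer_prod_poly f k) :
  [/\ size (P ord0 ord0) = k.+1,
      lead_coef (P ord0 ord0) = \prod_(i < k) (a (f i))^-1,
      (size (P ord0 ord_max) <= k)%N, (size (P ord_max ord0) <= k)%N &
      (size (P ord_max ord_max) <= maxn 1 k)%N].
Proof.
rewrite {}/P; elim: k => [|k [s00 l00 s01 s10 s11]].
  by rewrite /transfer_prod_poly big_ord0 !mxE /= big_ord0 size_poly1 lead_coef1 size_poly0.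
rewrite /transfer_prod_poly big_ord_recr -/(transfer_prod_poly f k) /= !mulmx2E.
rewrite [transfer_poly _ ord0 ord_max]mxE [transfer_poly _ ord_max _]mxE [transfer_poly _ ord_max _]mxE /=.
rewrite !mulr1 !mulr0 !addr0.
set P := transfer_prod_poly f k; set u := transfer_poly (f k) ord0 ord0.
have P00_neq0 : P ord0 ord0 != 0 by rewrite -size_poly_gt0 s00.
have u_neq0 : u != 0 by rewrite -size_poly_gt0 size_transfer_poly00.
have sPu : size (P ord0 ord0 * u) = k.+2.
  by rewrite size_mul // s00 size_transfer_poly00 addn2.
have sP01 : (size (P ord0 ord_max) < size (P ord0 ord0 * u)%R)%N.
  by rewrite sPu ltnS (leq_trans s01).
split.
- by rewrite size_polyDl.
- by rewrite lead_coefDl // lead_coefM l00 lead_coef_transfer_poly00 big_ord_recr.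
- by rewrite mulrC mul_polyC (leq_trans (size_scale_leq _ _)) ?s00.
- rewrite (leq_trans (size_polyD _ _)) // geq_max; apply/andP; split.
    by rewrite (leq_trans (size_polyMleq _ _)) // size_transfer_poly00 addn2.
  by rewrite (leq_trans s11) // geq_max leqnSn.
- rewrite mulrC mul_polyC (leq_trans (size_scale_leq _ _)) //.
  by rewrite (leq_trans s10) // (leq_trans (leqnSn k)) ?leq_maxr.
Qed.

End DiscriminantPolynomial.

Lemma discriminant_poly (R : realType) (p : nat) (a b : int -> R) :
  (forall n, a n != 0) -> (0 < p)%N ->
  exists D : {poly R},
    [/\ size D = p.+1, lead_coef D = (\prod_(i < p) a i.+1%:Z)^-1 &
        forall l, discriminant p a b l = D.[l]].
Proof.
move=> a_neq0 p_gt0; set f := fun i : nat => (p - i)%:Z.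
have [s00 l00 _ _ s11] := transfer_prod_poly_size b a_neq0 f p.
set P := transfer_prod_poly a b f p in s00 l00 s11.
have s11_lt : (size (P ord_max ord_max) < size (P ord0 ord0))%N.
  by rewrite s00 ltnS (leq_trans s11) // geq_max p_gt0 leqnn.
exists (\tr P); split.
- by rewrite mxtrace2E size_polyDl.
- rewrite mxtrace2E lead_coefDl // l00 prodfV (reindex_inj rev_ord_inj) /=.
  by congr (_^-1); apply: eq_bigr => i _; rewrite /f subKn.
- by move=> l; rewrite /discriminant -(transfer_prod_polyE a b f p l) trace_map_mx.
Qed.

Lemma geomA_expn (R : realType) (p : nat) (a : int -> R) :
  (0 < p)%N -> (forall n, 0 <= a n) -> geomA p a ^+ p = \prod_(i < p) a i.+1%:Z.
Proof.
move=> p_gt0 a_ge0; rewrite /geomA -powR_mulrn ?powR_ge0 // -powRrM.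
by rewrite mulVf ?pnatr_eq0 -?lt0n // powRr1 // prodr_ge0.
Qed.

Lemma norm_horner_uniq_roots (F : numFieldType) (Q : {poly F}) (rs : seq F) y :
  size Q = (size rs).+1 -> all (root Q) rs -> uniq rs ->
  `|Q.[y]| = `|lead_coef Q| * \prod_(r <- rs) `|y - r|.
Proof.
move=> size_Q roots_Q; rewrite -uniq_rootsE => /(all_roots_prod_XsubC size_Q roots_Q) {1}->.
rewrite hornerZ horner_prod normrM normr_prod.
by congr (_ * _); apply: eq_bigr => r _; rewrite hornerXsubC.
Qed.

Section Bands.
Variables (R : realType) (p : nat) (a b : int -> R) (lo hi : nat -> R).
Hypothesis bands : band_edges p a b lo hi.
Local Notation Delta := (discriminant p a b).

Lemma discriminant_band_edges n : (n < p)%N ->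
  (Delta (lo n) = -2 /\ Delta (hi n) = 2) \/ (Delta (lo n) = 2 /\ Delta (hi n) = -2).
Proof.
case: bands => spec lo_lt_hi _ mono onto n_lt_p.
have lo_le_hi : lo n <= hi n by rewrite ltW ?lo_lt_hi.
have bound x : lo n <= x <= hi n -> -2 <= Delta x <= 2.
  by move=> x_n; rewrite -ler_norml; apply/spec; exists n.
have /andP[? ?] := bound (lo n) (introT andP (conj (lexx _) lo_le_hi)).
have /andP[? ?] := bound (hi n) (introT andP (conj lo_le_hi (lexx _))).
have [x1 /andP[lo_x1 x1_hi] Dx1] := onto n n_lt_p (-2) ltac:(lra).
have [x2 /andP[lo_x2 x2_hi] Dx2] := onto n n_lt_p 2 ltac:(lra).
case: (mono n n_lt_p) => M; [left | right].
- have := M _ _ (lexx _) lo_x1 x1_hi; have := M _ _ lo_x2 x2_hi (lexx _).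
  by rewrite Dx1 Dx2; split; lra.
- have := M _ _ (lexx _) lo_x2 x2_hi; have := M _ _ lo_x1 x1_hi (lexx _).
  by rewrite Dx1 Dx2; split; lra.
Qed.

Let in_bands_convex : {in gtn p &, forall i j k, (i < k < j)%N -> k \in gtn p}.
Proof. by move=> i j _ j_lt_p k /andP[_ /ltn_trans]; apply. Qed.

Lemma band_in_hull n x : (n < p)%N -> lo n <= x <= hi n -> lo 0 <= x <= hi p.-1.
Proof.
case: bands => _ lo_lt_hi hi_le_lo _ _ n_lt_p /andP[lo_x x_hi].
have lo_homo : {in gtn p &, {homo lo : i j / (i <= j)%N >-> i <= j}}.
  apply: homo_leq_in in_bands_convex _ => // [|i _ /[!inE] Si_lt_p]; first exact: le_trans.
  by rewrite (le_trans (ltW (lo_lt_hi _ (ltnW Si_lt_p)))) ?hi_le_lo.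
have hi_homo : {in gtn p &, {homo hi : i j / (i <= j)%N >-> i <= j}}.
  apply: homo_leq_in in_bands_convex _ => // [|i _ /[!inE] Si_lt_p]; first exact: le_trans.
  by rewrite (le_trans (hi_le_lo _ Si_lt_p)) ?ltW ?lo_lt_hi.
have p_gt0 : (0 < p)%N by apply: leq_ltn_trans n_lt_p.
rewrite (le_trans (lo_homo 0%N n _ _ _)) ?(le_trans x_hi (hi_homo n p.-1 _ _ _)) //.
- by rewrite inE prednK.
- by rewrite -ltnS prednK.
Qed.

Lemma band_level_points c : -2 < c < 2 ->
  exists r : nat -> R, forall n, (n < p)%N -> lo n < r n < hi n /\ Delta (r n) = c.
Proof.
case: bands => _ _ _ _ onto /andP[c_gt c_lt].
suff /boolp.choice[r r_c] : forall n, exists x,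
    (n < p)%N -> lo n < x < hi n /\ Delta x = c by exists r.
move=> n; case: (ltnP n p) => [n_lt_p|]; last by exists 0.
have [x /andP[lo_x x_hi] Dx] := onto n n_lt_p c ltac:(lra).
have [Dlo_neq Dhi_neq] : Delta (lo n) != c /\ Delta (hi n) != c.
  by case: (discriminant_band_edges n_lt_p) => -[-> ->]; split; apply/eqP; lra.
exists x => _; split=> //; rewrite !lt_neqAle lo_x x_hi !andbT; apply/andP; split.
- by apply: contraNneq Dlo_neq => ->; rewrite Dx.
- by apply: contraNneq Dhi_neq => <-; rewrite Dx.
Qed.

Lemma band_points_increasing (r : nat -> R) :
    (forall n, (n < p)%N -> lo n < r n < hi n) ->
  {in gtn p &, {homo r : i j / (i < j)%N >-> i < j}}.
Proof.
case: bands => _ _ hi_le_lo _ _ r_in.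
apply: homo_ltn_in in_bands_convex _ => [|i _ /[!inE] Si_lt_p]; first exact: lt_trans.
have /andP[_ ri_lt] := r_in i (ltnW Si_lt_p); have /andP[lt_rSi _] := r_in _ Si_lt_p.
exact: lt_trans ri_lt (le_lt_trans (hi_le_lo i Si_lt_p) lt_rSi).
Qed.

Lemma band_level_estimate (D : {poly R}) c : (0 < p)%N ->
    size D = p.+1 -> (forall l, Delta l = D.[l]) -> 0 <= c < 2 ->
  2 + c <= `|lead_coef D| * (hi 0 - lo 0) * (hi p.-1 - lo 0) ^+ p.-1.
Proof.
move=> p_gt0 size_D DeltaE /andP[c_ge0 c_lt2]; have [_ _ _ _ onto] := bands.
have [y /andP[lo_y y_hi] Dy] := onto 0%N p_gt0 (-2) ltac:(lra).
have [r r_c] := band_level_points (c := c) ltac:(lra).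
have r_in n : (n < p)%N -> lo n < r n < hi n by case/r_c.
set rs := [seq r i | i <- index_iota 0 p].
have uniq_rs : uniq rs.
  apply/lt_sorted_uniq/(homo_sorted_in (band_points_increasing r_in))/iota_ltn_sorted.
  by apply/allP => i; rewrite mem_index_iota.
have roots_rs : all (root (D - c%:P)) rs.
  apply/allP => z /mapP[i]; rewrite mem_index_iota => /andP[_ i_lt_p] ->.
  by rewrite rootE hornerD hornerN hornerC -DeltaE (proj2 (r_c i i_lt_p)) subrr.
have size_c : (size (- c%:P) < size D)%N by rewrite size_polyN size_D ltnS (leq_trans (size_polyC_leq1 _)).
have size_Dc : size (D - c%:P) = (size rs).+1.
  by rewrite size_polyDl // size_D size_map size_iota subn0.
have := norm_horner_uniq_roots y size_Dc roots_rs uniq_rs.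
rewrite lead_coefDl //.
rewrite hornerD hornerN hornerC -DeltaE Dy ler0_norm ?opprB ?opprK; last by lra.
rewrite addrC => ->; rewrite big_map -mulrA ler_wpM2l ?normr_ge0 // big_ltn //.
have [lo_r0 r0_hi] := andP (r_in 0%N p_gt0).
apply: ler_pM; rewrite ?normr_ge0 ?prodr_ge0 //; first by rewrite ler_norml; apply/andP; split; lra.
rewrite -[X in _ ^+ X]subn1 -prodr_const_nat big_nat_cond [leRHS]big_nat_cond.
apply: ler_prod => i /andP[/andP[_ i_lt_p] _]; rewrite normr_ge0 ler_norml /=.
have /andP[lo_ri ri_hi] := r_in i i_lt_p.
have /andP[? ?] : lo 0 <= y <= hi p.-1 by apply: (band_in_hull p_gt0); rewrite lo_y.
have /andP[? ?] : lo 0 <= r i <= hi p.-1 by apply: (band_in_hull i_lt_p); rewrite !ltW.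
by apply/andP; split; lra.
Qed.

Lemma band_estimate (D : {poly R}) : (0 < p)%N ->
    size D = p.+1 -> (forall l, Delta l = D.[l]) ->
  4 <= `|lead_coef D| * (hi 0 - lo 0) * (hi p.-1 - lo 0) ^+ p.-1.
Proof.
(* Only levels c < 2 are usable: at c = 2 the level points of two touching
   bands may coincide. *)
move=> p_gt0 size_D DeltaE; set K := _ * _ * _.
have K_ge2 : 2 + 0 <= K by apply: band_level_estimate => //; rewrite lexx ltr0n.
rewrite leNgt; apply/negP => K_lt4.
have : 2 + K / 2 <= K by apply: band_level_estimate => //; apply/andP; split; lra.
lra.
Qed.

End Bands.

Theorem corollary1p2 (R : realType) (p : nat) (a b : int -> R)
    (lo hi : nat -> R) :
  (2 <= p)%N ->
  (forall n, 0 < a n) ->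
  (forall n, a (n + p%:Z) = a n) ->
  (forall n, b (n + p%:Z) = b n) ->
  band_edges p a b lo hi ->
  4 * geomA p a ^+ p / (hi p.-1 - lo 0%N) ^+ p.-1
    <= \big[Num.max/0]_(n < p) (hi n - lo n).
Proof.
move=> p_ge2 a_gt0 _ _ bands; have p_gt0 : (0 < p)%N := ltnW p_ge2.
have [D [size_D lead_D DeltaE]] := discriminant_poly b (fun n => lt0r_neq0 (a_gt0 n)) p_gt0.
have G_eq := geomA_expn p_gt0 (fun n => ltW (a_gt0 n)).
have G_gt0 : 0 < geomA p a ^+ p by rewrite G_eq prodr_gt0.
have s_gt0 : 0 < hi p.-1 - lo 0.
  have [_ lo_lt_hi _ _ _] := bands.
  have /andP[_ ?] : lo 0 <= hi 0 <= hi p.-1.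
    by apply: (band_in_hull bands p_gt0); rewrite lexx andbT ltW ?lo_lt_hi.
  by rewrite subr_gt0 (lt_le_trans (lo_lt_hi _ p_gt0)).
have := band_estimate bands p_gt0 size_D DeltaE.
rewrite lead_D -G_eq ger0_norm; last by rewrite invr_ge0 ltW.
rewrite -mulrA ler_pdivlMl // => est.
rewrite ler_pdivrMr ?exprn_gt0 // mulrC (le_trans est) //.
rewrite ler_pM2r ?exprn_gt0 //.
exact: (le_bigmax _ (fun n : 'I_p => hi n - lo n) (Ordinal p_gt0)).
Qed.
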